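(* In the $L^p$ setting of the context ($1<p<\infty$), assume in addition that the measure space $(\Omega,\mu)$ is separable, $G$ is countable and $E$ is separable. Then for every finite $F\subset G$ and $a_g\in A$ ($g\in F$), the element $\bar b=\sum_{g\in F}\bar a_gV_g\in B(\bar A,V_g)$ satisfies $$\|\bar b\|_{L(H)}=\operatorname{ess\,sup}_{x\in\Omega}\|b_x\|_{L(l^p(G,E))},$$ where $b_x=\sum_{g\in F}\pi_x(a_g)\pi_x(T_g)$.
   Context: Setting: $(\Omega,\mu)$ is a measure space with $\sigma$-additive $\sigma$-finite measure $\mu$, $E$ a Banach space, $G$ a discrete group, $\{\alpha_g\}_{g\in G}$ a group of invertible measurable maps $\Omega\to\Omega$ ($\alpha_{gh}=\alpha_g\circ\alpha_h$, $\alpha_e=\mathrm{id}$) such that $\alpha_g$ and $\alpha_g^{-1}$ preserve $\mu$-null sets. $D=L^p_\mu(\Omega,E)$; $A=L^\infty_\mu(\Omega,L(E))$ acts on $D$ by $(af)(x)=a(x)f(x)$; $(T_gf)(x)=\rho_g(x)^{1/p}f(\alpha_g^{-1}(x))$, where $\rho_g$ is the Radon–Nikodym derivative of the measure $\Delta\mapsto\mu(\alpha_g^{-1}(\Delta))$ with respect to $\mu$; $\hat T_g(a)=T_gaT_g^{-1}$, i.e. $\hat T_g(a)(x)=a(\alpha_g^{-1}(x))$. Regular representation: $H=l^p(G,D)$; $(V_{g_0}\xi)(g)=\xi(gg_0)$; $(\bar a\xi)(g)=\hat T_g(a)\xi(g)$; $B(\bar A,V_g)$ is the closed subalgebra of $L(H)$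 generated by $\bar A$ and the $V_g$. Trajectorial representations: for $x\in\Omega$, $\pi_x(a)$ and $\pi_x(T_{g_0})$ are the operators on $l^p(G,E)$ given by $(\pi_x(a)\xi)_g=a(\alpha_g^{-1}(x))\xi_g$ and $(\pi_x(T_{g_0})\xi)_g=\xi_{gg_0}$, $\xi=(\xi_g)_{g\in G}\in l^p(G,E)$ (defined for a.e. $x$ after choosing representatives of the $a_g$). *)

From HB Require Import structures.
From mathcomp Require Import all_boot all_order all_algebra.
From mathcomp Require Import all_classical all_reals all_analysis.
Set Implicit Arguments. Unset Strict Implicit. Unset Printing Implicit Defensive.
Import Order.TTheory GRing.Theory Num.Theory.
Import numFieldNormedType.Exports.
Local Open Scope classical_set_scope.
Local Open Scope ring_scope.

Definition is_group (G : Type) (mul : G -> G -> G) (inv : G -> G) (e : G) : Prop :=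
  [/\ forall x y z, mul x (mul y z) = mul (mul x y) z,
      forall x, mul e x = x,
      forall x, mul x e = x,
      forall x, mul (inv x) x = e &
      forall x, mul x (inv x) = e].

Definition is_group_action (G T : Type) (mul : G -> G -> G) (e : G)
  (alpha : G -> T -> T) : Prop :=
  (forall g h, alpha (mul g h) = alpha g \o alpha h) /\ alpha e = id.

Definition separable_space (R : realType) (E : normedModType R) : Prop :=
  exists D : nat -> E, forall (y : E) (eps : R), 0 < eps ->
    exists n, `|y - D n| < eps.

Definition separable_measure (d : measure_display) (T : measurableType d)
  (R : realType) (mu : {measure set T -> \bar R}) : Prop :=
  exists C : nat -> set T, (forall n, measurable (C n)) /\
    forall A, measurable A -> (mu A < +oo)%E -> forall eps : R, 0 < eps ->
      exists n, (mu ((A `\` C n) `|` (C n `\` A)) < eps%:E)%E.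

(* Borel measurability of an E-valued function (for separable E this is
   strong / Bochner measurability). *)
Definition borel_meas (d : measure_display) (T : measurableType d)
  (R : realType) (E : normedModType R) (f : T -> E) : Prop :=
  forall U : set E, open U -> measurable (f @^-1` U).

(* Representative of an element of A = L^oo_mu(Omega, L(E)):
   a(x) is a bounded linear operator for every x, with a uniform bound,
   and x |-> a(x)u is measurable for every u (strong measurability). *)
Definition Linf_op (d : measure_display) (T : measurableType d)
  (R : realType) (E : normedModType R) (a : T -> E -> E) : Prop :=
  [/\ forall x (k : R) (u v : E), a x (k *: u + v) = k *: a x u + a x v,
      exists C : R, forall x u, `|a x u| <= C * `|u| &
      forall u, borel_meas (fun x => a x u)].

Definition lp_norm (R : realType) (G : choiceType) (E : normedModType R)
  (p : R) (eta : G -> E) : \bar R :=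
  ((\esum_(g in setT) ((`|eta g| `^ p)%:E)) `^ p^-1)%E.

(* Norm of H = l^p(G, L^p_mu(Omega,E)), in \bar R. *)
Definition H_norm (d : measure_display) (T : measurableType d)
  (R : realType) (mu : {measure set T -> \bar R}) (G : choiceType)
  (E : normedModType R) (p : R) (xi : G -> T -> E) : \bar R :=
  ((\esum_(g in setT) (\int[mu]_x ((`|xi g x| `^ p)%:E))) `^ p^-1)%E.

Definition in_H (d : measure_display) (T : measurableType d)
  (R : realType) (mu : {measure set T -> \bar R}) (G : choiceType)
  (E : normedModType R) (p : R) (xi : G -> T -> E) : Prop :=
  (forall g, borel_meas (xi g)) /\ (H_norm mu p xi < +oo)%E.

Definition H_opnorm (d : measure_display) (T : measurableType d)
  (R : realType) (mu : {measure set T -> \bar R}) (G : choiceType)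
  (E : normedModType R) (p : R) (op : (G -> T -> E) -> (G -> T -> E)) : \bar R :=
  ereal_sup [set H_norm mu p (op xi) | xi in
              [set xi | in_H mu p xi /\ (H_norm mu p xi <= 1)%E]].

Definition lp_opnorm (R : realType) (G : choiceType) (E : normedModType R)
  (p : R) (op : (G -> E) -> (G -> E)) : \bar R :=
  ereal_sup [set lp_norm p (op eta) | eta in [set eta | (lp_norm p eta <= 1)%E]].

Definition ess_sup_nonneg (d : measure_display) (T : measurableType d)
  (R : realType) (mu : {measure set T -> \bar R}) (f : T -> \bar R) : \bar R :=
  ereal_inf [set C : \bar R | (0 <= C)%E /\ {ae mu, forall x, (f x <= C)%E}].

(* The regular representation on H = l^p(G,D):
   (V_{g0} xi)(g) = xi(g g0); (abar xi)(g) = That_g(a) xi(g),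
   That_g(a)(x) = a(alpha_g^{-1}(x)) = a(alpha_{g^{-1}}(x)). *)
Definition V_H (G T E : Type) (mul : G -> G -> G) (g0 : G)
  (xi : G -> T -> E) : G -> T -> E := fun g => xi (mul g g0).

Definition abar (G T E : Type) (inv : G -> G) (alpha : G -> T -> T)
  (a : T -> E -> E) (xi : G -> T -> E) : G -> T -> E :=
  fun g x => a (alpha (inv g) x) (xi g x).

Definition pi_a (G T E : Type) (inv : G -> G) (alpha : G -> T -> T) (x : T)
  (a : T -> E -> E) (eta : G -> E) : G -> E :=
  fun g => a (alpha (inv g) x) (eta g).

Definition pi_T (G E : Type) (mul : G -> G -> G) (g0 : G) (eta : G -> E) : G -> E :=
  fun g => eta (mul g g0).

Definition bbar (G T : Type) (R : realType) (E : normedModType R)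
  (mul : G -> G -> G) (inv : G -> G) (alpha : G -> T -> T)
  (F : seq G) (a : G -> T -> E -> E) (xi : G -> T -> E) : G -> T -> E :=
  fun g x => \sum_(h <- F) abar inv alpha (a h) (V_H mul h xi) g x.

Definition b_x (G T : Type) (R : realType) (E : normedModType R)
  (mul : G -> G -> G) (inv : G -> G) (alpha : G -> T -> T)
  (F : seq G) (a : G -> T -> E -> E) (x : T) (eta : G -> E) : G -> E :=
  fun g => \sum_(h <- F) pi_a inv alpha x (a h) (pi_T mul h eta) g.

From HB Require Import structures.
From mathcomp Require Import all_boot all_order all_algebra.
From mathcomp Require Import all_classical all_reals all_analysis.
From mathcomp Require Import ring lra measurable_realfun.
Import Order.TTheory GRing.Theory Num.Theory.
Import numFieldNormedType.Exports.
Local Open Scope classical_set_scope.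
Local Open Scope ring_scope.
Set Implicit Arguments. Unset Strict Implicit. Unset Printing Implicit Defensive.

(* The operator [bbar] acts fibrewise: [bbar xi g x = b_x x (xi^~ x) g].  By
   Tonelli over the countable group, [|bbar xi|^p] is the integral of
   [|b_x x (xi^~ x)|^p], which is at most [(ess sup |b_x|)^p |xi|^p].
   Conversely, if [|b_x| > n] on a non-null set, the separability of [E] and
   the countability of [G] let the witnessing vectors and finite windows of
   coordinates be drawn from a countable family, so that set is a countable
   union of measurable sets; on a subset of one of them of positive finite
   measure (sigma-finiteness), the test function [1_A * eta] gives
   [|bbar| > n]. *)

Section borel_meas.
Context (R : realType) (d : measure_display) (T : measurableType d)
  (E : normedModType R).

Lemma measurable_const_set (P : Prop) : measurable [set _ : T | P].
Proof.
have [h|h] := pselect P.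
  by rewrite (_ : [set _ | _] = setT) //; apply/seteqP; split.
by rewrite (_ : [set _ | _] = set0) //; apply/seteqP; split.
Qed.

Lemma borel_meas_cst (v : E) : borel_meas (fun _ : T => v).
Proof. by move=> U _; exact: measurable_const_set. Qed.

Lemma borel_meas_if (A : set T) (v w : E) : measurable A ->
  borel_meas (fun x => if x \in A then v else w).
Proof.
move=> mA U _.
have -> : (fun x => if x \in A then v else w) @^-1` U =
  (A `&` [set _ | U v]) `|` (~` A `&` [set _ | U w]).
  apply/seteqP; split => x /=.
    case: ifPn => xA Ux; [left|right]; split => //; first exact: set_mem.
    by move=> Ax; move: xA; rewrite (mem_set Ax).
  case=> -[xA Ux]; first by rewrite ifT // mem_set.
  by rewrite ifF //; apply/negbTE/negP => /set_mem.
by apply: measurableU; apply: measurableI;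
  [|exact: measurable_const_set|exact: measurableC|exact: measurable_const_set].
Qed.

Lemma measurable_norm_sub_lt (f : T -> E) (v : E) (r : R) : borel_meas f ->
  measurable [set x | `|v - f x| < r].
Proof.
move=> bf; apply: (bf [set y | `|v - y| < r]).
rewrite (_ : [set y | _] = ball v r); first exact: ball_open.
by apply/seteqP; split => y /=; rewrite -ball_normE.
Qed.

Lemma measurable_fun_norm (f : T -> E) : borel_meas f ->
  measurable_fun setT (fun x => `|f x|).
Proof.
move=> bf; apply: (measurability _ (measurable_realfun.RGenOpens.measurableE R)).
move=> _ [_ [a [b ->]] <-]; rewrite setTI.
have -> : (fun x => `|f x|) @^-1` `]a, b[%classic =
   f @^-1` ((@Num.Def.normr R E) @^-1` `]a, b[%classic) by [].
apply: bf; move: (@interval_open R (BRight a) (BLeft b) isT isT).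
by apply: (proj1 (continuousP _)); exact: norm_continuous.
Qed.

Lemma open_norm_ball (U : set E) (y : E) : open U -> U y ->
  exists2 e : R, 0 < e & forall z, `|y - z| < e -> U z.
Proof.
rewrite openE => /[apply]; rewrite /interior nbhs_ballP => -[e /= e0 eU].
by exists e => // z yz; apply: eU; rewrite -ball_normE.
Qed.

Variable D : nat -> E.
Hypothesis D_dense : forall (y : E) (eps : R), 0 < eps -> exists n, `|y - D n| < eps.

(* [f x (xi x)] lies in the open set [U] iff for some [j], [n], [m] the ball
   of radius [(|C| + 2) / (j + 1)] around [D m] lies in [U], while [xi x] is
   [1 / (j + 1)]-close to [D n] and [f x (D n)] is [1 / (j + 1)]-close to
   [D m]: a countable union of measurable sets. *)
Lemma borel_meas_lipschitz_comp (f : T -> E -> E) (C : R) (xi : T -> E) :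
  (forall v, borel_meas (fun x => f x v)) ->
  (forall x u v, `|f x u - f x v| <= C * `|u - v|) ->
  borel_meas xi -> borel_meas (fun x => f x (xi x)).
Proof.
move=> bf lf bxi U oU.
pose r (j : nat) : R := j.+1%:R^-1.
have r_gt0 j : 0 < r j by rewrite invr_gt0 ltr0n.
have c0 : 0 <= `|C| by [].
have lf_r x u v j : `|u - v| < r j -> `|f x u - f x v| <= `|C| * r j.
  move=> uv; apply: le_trans (lf _ _ _) (le_trans (ler_wpM2r _ (ler_norm C)) _) => //.
  by apply: ler_wpM2l => //; exact: ltW.
pose inU j m := forall y, `|D m - y| < (`|C| + 2) * r j -> U y.
pose piece j n m := [set x | inU j m /\
   (`|D n - xi x| < r j /\ `|D m - f x (D n)| < r j)].
have -> : (fun x => f x (xi x)) @^-1` U =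
    \bigcup_j \bigcup_n \bigcup_m piece j n m.
  apply/seteqP; split => x /=.
  - move=> Ux.
    have [e e0 eU] := open_norm_ball oU Ux.
    have K0 : 0 < `|C| * 2 + 4 by rewrite ltr_wpDl // mulr_ge0.
    have [j jK] : exists j, r j < e / (`|C| * 2 + 4).
      have := near_infty_natSinv_lt (PosNum (divr_gt0 e0 K0)).
      by case=> N _ HN; exists N; apply: (HN N) => /=.
    have [n hn] := D_dense (xi x) (r_gt0 j).
    have [m hm] := D_dense (f x (D n)) (r_gt0 j).
    exists j => //; exists n => //; exists m => //.
    split; last by split => //; rewrite distrC.
    move=> y hy; apply: eU.
    have h1 := lf_r x _ _ j hn.
    have h2 := ler_distD (f x (D n)) (f x (xi x)) (D m).
    apply: le_lt_trans (ler_distD (D m) _ _) _.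
    move: jK; rewrite ltr_pdivlMr // => jK.
    have := r_gt0 j; nra.
  - move=> [j _ [n _ [m _ [inUjm [h1 h2]]]]]; apply: inUjm.
    have h3 := lf_r x _ _ j h1.
    apply: le_lt_trans (ler_distD (f x (D n)) _ _) _.
    have := r_gt0 j; nra.
apply: bigcupT_measurable => j; apply: bigcupT_measurable => n.
apply: bigcupT_measurable => m.
have [inUjm|not_inUjm] := pselect (inU j m); last first.
  by rewrite (_ : piece j n m = set0) //; apply/seteqP; split => x // [].
rewrite (_ : piece j n m = [set x | `|D n - xi x| < r j] `&`
                            [set x | `|D m - f x (D n)| < r j]).
  by apply: measurableI; apply: measurable_norm_sub_lt.
by apply/seteqP; split => x /=; [case=> _ []|case=> ? ?].
Qed.

Lemma borel_meas_add (f g : T -> E) :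
  borel_meas f -> borel_meas g -> borel_meas (fun x => f x + g x).
Proof.
move=> bf bg.
apply: (@borel_meas_lipschitz_comp (fun x v => v + g x) 1) => //.
- move=> v U oU.
  have -> : (fun x => v + g x) @^-1` U = g @^-1` [set y | U (v + y)] by [].
  apply: bg; move: oU; apply: (proj1 (continuousP (fun y : E => v + y))).
  by move=> y; apply: cvgD; [exact: cvg_cst|exact: cvg_id].
- by move=> x u w; rewrite mul1r opprD addrACA subrr addr0.
Qed.

Lemma borel_meas_sum (I : eqType) (s : seq I) (f : I -> T -> E) :
  (forall i, i \in s -> borel_meas (f i)) ->
  borel_meas (fun x => \sum_(i <- s) f i x).
Proof.
elim: s => [|i s IH] bf.
  by under eq_fun do rewrite big_nil; exact: borel_meas_cst.
under eq_fun do rewrite big_cons.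
apply: borel_meas_add; first by apply: bf; rewrite mem_head.
by apply: IH => j js; apply: bf; rewrite inE js orbT.
Qed.

End borel_meas.

Section esum_countable.
Context (R : realType) (G : countType).
Local Open Scope ereal_scope.

Definition pickle_seq (f : G -> \bar R) (n : nat) : \bar R :=
  if pickle_inv n is Some g then f g else 0.

Lemma pickle_seq_ge0 (f : G -> \bar R) n :
  (forall g, 0 <= f g) -> 0 <= pickle_seq f n.
Proof. by move=> f0; rewrite /pickle_seq; case: pickle_inv => [g|]. Qed.

Lemma esum_pickle_seq (f : G -> \bar R) : (forall g, 0 <= f g) ->
  \esum_(g in setT) f g = \sum_(n <oo) pickle_seq f n.
Proof.
move=> f0; have f_pickle0 n : 0 <= pickle_seq f n by exact: pickle_seq_ge0.
rewrite nneseries_esumT // (esumID (range (@pickle G))) //.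
rewrite [X in _ + X]esum1 ?adde0; last first.
  move=> n [_ /= nr]; rewrite /pickle_seq; case E : (pickle_inv n) => [g|//].
  by exfalso; apply: nr; exists g => //; have := @pickle_invK G n; rewrite E.
rewrite setTI esum_image; last by move=> x y _ _; exact: (pcan_inj (@pickleK_inv G)).
by apply: eq_esum => g _; rewrite /pickle_seq pickleK_inv.
Qed.

Lemma esumZl (k : R) (f : G -> \bar R) : (0 <= k)%R -> (forall g, 0 <= f g) ->
  \esum_(g in setT) (k%:E * f g) = k%:E * \esum_(g in setT) f g.
Proof.
move=> k0 f0; rewrite !esum_pickle_seq //; last by move=> g; rewrite mule_ge0.
rewrite -nneseriesZl; last by move=> n _; exact: pickle_seq_ge0 f0.
by apply: eq_eseriesr => n _; rewrite /pickle_seq; case: pickle_inv => //; rewrite mule0.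
Qed.

Context (d : measure_display) (T : measurableType d) (mu : {measure set T -> \bar R}).

Lemma measurable_fun_esum (f : G -> T -> \bar R) :
  (forall g, measurable_fun setT (f g)) -> (forall g x, 0 <= f g x) ->
  measurable_fun setT (fun x => \esum_(g in setT) f g x).
Proof.
move=> mf f0.
have -> : (fun x => \esum_(g in setT) f g x) =
    (fun x => \sum_(0 <= n <oo | n \in [set: nat]) pickle_seq (f^~ x) n).
  apply/funext => x; rewrite esum_pickle_seq //.
  by apply: eq_eseriesl => n; rewrite in_setT.
apply: ge0_emeasurable_sum => [k x _ _|k _]; first exact: pickle_seq_ge0.
by rewrite /pickle_seq; case: pickle_inv => [g|]; [exact: mf|exact: measurable_cst].
Qed.

Lemma ge0_integral_esum (f : G -> T -> \bar R) :
  (forall g, measurable_fun setT (f g)) -> (forall g x, 0 <= f g x) ->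
  \int[mu]_x (\esum_(g in setT) f g x) = \esum_(g in setT) \int[mu]_x f g x.
Proof.
move=> mf f0.
under eq_integral do rewrite esum_pickle_seq //.
rewrite esum_pickle_seq; last by move=> g; apply: integral_ge0 => x _.
rewrite integral_nneseries //.
- apply: eq_eseriesr => n _; rewrite /pickle_seq; case: pickle_inv => //.
  exact: integral0.
- by move=> n; rewrite /pickle_seq; case: pickle_inv => [g|]; [exact: mf|exact: measurable_cst].
- by move=> n x _; exact: pickle_seq_ge0.
Qed.

End esum_countable.

Section poweR.
Context (R : realType).
Local Open Scope ereal_scope.

Lemma poweRK (r : R) (y : \bar R) : (0 < r)%R -> 0 <= y -> (y `^ r) `^ r^-1 = y.
Proof. by move=> r0 y0; rewrite -poweRrM mulfV ?gt_eqF // poweRe1. Qed.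

Lemma EFin_powRK (r c : R) : (0 < r)%R -> (0 <= c)%R ->
  c%:E = ((c `^ r)%:E) `^ r^-1.
Proof. by move=> r0 c0; rewrite poweR_EFin -powRrM mulfV ?gt_eqF // powRr1. Qed.

Lemma powR_NinvK (r w : R) : (0 < r)%R -> (0 <= w)%R -> ((w `^ (- r^-1)) `^ r = w^-1)%R.
Proof. by move=> r0 w0; rewrite -powRrM mulNr mulVf ?gt_eqF // powR_inv1. Qed.

Lemma ge0_lee_poweR2 (r : R) (y z : \bar R) : (0 < r)%R -> 0 <= y -> 0 <= z ->
  (y `^ r <= z `^ r) = (y <= z).
Proof.
have in0y (w : \bar R) : 0 <= w -> w \in `[0%E, +oo%E] by rewrite in_itv /= leey andbT.
move=> r0 y0 z0; apply/idP/idP => h; last first.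
  by apply: (gt0_ler_poweR (ltW r0)) => //; apply: in0y.
rewrite -(poweRK r0 y0) -(poweRK r0 z0).
have ri : (0 <= r^-1)%R by rewrite invr_ge0 ltW.
by apply: (gt0_ler_poweR ri) => //; apply: in0y; exact: poweR_ge0.
Qed.

End poweR.

Section linear_op.
Context (R : realType) (E : normedModType R) (X : Type) (a : X -> E -> E).
Hypothesis a_linear : forall x (k : R) (u v : E), a x (k *: u + v) = k *: a x u + a x v.

Lemma linear_op0 x : a x 0 = 0.
Proof.
have := a_linear x 1 0 0; rewrite scaler0 addr0 scale1r.
by move/(congr1 (fun w => w - a x 0)); rewrite subrr addrK.
Qed.

Lemma linear_opZ x k u : a x (k *: u) = k *: a x u.
Proof. by have := a_linear x k u 0; rewrite !addr0 linear_op0 addr0. Qed.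

Lemma linear_opB x u v : a x (u - v) = a x u - a x v.
Proof. by have := a_linear x (-1) v u; rewrite !scaleN1r addrC => ->; rewrite addrC. Qed.

End linear_op.

Lemma Linf_op_lipschitz (R : realType) (d : measure_display) (T : measurableType d)
  (E : normedModType R) (a : T -> E -> E) : Linf_op a ->
  exists C : R, forall x u v, `|a x u - a x v| <= C * `|u - v|.
Proof. by case=> alin [C hC] _; exists C => x u v; rewrite -(linear_opB alin) hC. Qed.

Section continuity.
Context (R : realType).

Lemma lipschitz_cvg (V W : normedModType R) (f : V -> W) (C : R)
    (u : nat -> V) (v : V) :
  (forall x y, `|f x - f y| <= C * `|x - y|) ->
  u n @[n --> \oo] --> v -> f (u n) @[n --> \oo] --> f v.
Proof.
move=> Lf /cvgrPdist_lt uv; apply/cvgrPdist_lt => e e0.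
have K0 : 0 < `|C| + 1 by rewrite ltr_wpDl.
move: (uv (e / (`|C| + 1)) (divr_gt0 e0 K0)); apply: filterS => n.
rewrite ltr_pdivlMr // => hn.
apply: le_lt_trans (Lf _ _) _.
have h1 : C * `|v - u n| <= `|C| * `|v - u n|.
  by apply: ler_wpM2r => //; exact: ler_norm.
have c0 : 0 <= `|C| by [].
have n0 : 0 <= `|v - u n| by [].
nra.
Qed.

Lemma cvg_sum_seq (V : normedModType R) (I : eqType) (s : seq I)
    (f : I -> nat -> V) (l : I -> V) :
  (forall i, i \in s -> f i n @[n --> \oo] --> l i) ->
  (\sum_(i <- s) f i n) @[n --> \oo] --> \sum_(i <- s) l i.
Proof.
move=> fl; rewrite big_seq; under eq_cvg do rewrite big_seq.
by apply: cvg_big => //; exact: add_continuous.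
Qed.

Lemma continuous_normr_powR (p : R) : 0 < p -> continuous (fun y : R => `|y| `^ p).
Proof.
move=> p0 y; have [->|y0] := eqVneq y 0.
  apply/cvgrPdist_lt => e e0.
  have ep : 0 < e `^ p^-1 by apply: powR_gt0.
  have := @nbhs0_lt R R _ ep; apply: filterS => t ht /=.
  rewrite normr0 powR0 ?gt_eqF // sub0r normrN ger0_norm ?powR_ge0 //.
  have -> : e = (e `^ p^-1) `^ p by rewrite -powRrM mulVf ?gt_eqF ?powRr1 ?ltW.
  by apply: gt0_ltr_powR => //; rewrite ?inE ?nnegrE ?ltW.
have ny0 : `|y| != 0 by rewrite normr_eq0.
apply: (@cvg_trans _ ((expR (p * ln `|t|)) @[t --> y])).
  apply: near_eq_cvg.
  have /cvgrPdist_lt /(_ `|y|) := @cvg_id _ (nbhs y).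
  rewrite normr_gt0 => /(_ y0); apply: filterS => t ht.
  rewrite /powR ifF //; apply/negbTE; rewrite normr_eq0; apply/eqP => t0.
  by move: ht; rewrite t0 subr0 ltxx.
have -> : (fun y1 : R => `|y1| `^ p) y = expR (p * ln `|y|).
  by rewrite /= /powR (negbTE ny0).
have ln_cvg : ln `|t| @[t --> y] --> ln `|y|.
  by apply: (continuous_cvg _ (continuous_ln _)); [rewrite normr_gt0|exact: cvg_norm].
have mul_cvg : p * ln `|t| @[t --> y] --> p * ln `|y| by apply: cvgM => //; exact: cvg_cst.
exact: (continuous_cvg _ (@continuous_expR R _) mul_cvg).
Qed.

Lemma continuous_norm_powR {V : normedModType R} (p : R) : 0 < p ->
  continuous (fun v : V => `|v| `^ p).
Proof.
move=> p0 v.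
have -> : (fun v : V => `|v| `^ p) = (fun y : R => `|y| `^ p) \o (@Num.Def.normr R V).
  by apply/funext => w /=; rewrite normr_id.
by apply: continuous_comp; [exact: norm_continuous|exact: continuous_normr_powR].
Qed.

End continuity.

Lemma sigma_finite_subset_pos_measure (R : realType) (d : measure_display)
  (T : measurableType d) (mu : {measure set T -> \bar R}) (S : set T) :
  sigma_finite setT mu -> measurable S -> mu S != 0%E ->
  exists A : set T, [/\ measurable A, A `<=` S & exists2 r : R, mu A = r%:E & 0 < r].
Proof.
move=> [K Kcov mK] mS S0.
have [[k Sk0]|Sk0] := pselect (exists k, mu (S `&` K k) != 0%E); last first.
  exfalso; move/negP: S0; apply.
  have : mu.-negligible S.
    rewrite [S](_ : _ = \bigcup_k (S `&` K k)); last by rewrite -setI_bigcupr -Kcov setIT.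
    apply: negligible_bigcup => k; exists (S `&` K k); split => //.
      by apply: measurableI => //; exact: (mK k).1.
    by apply/eqP/contraT => SK0; exfalso; apply: Sk0; exists k.
  case=> N [mN N0 SN]; rewrite eq_le measure_ge0 andbT -N0.
  by apply: le_measure => //; rewrite inE.
have mSK : measurable (S `&` K k) by apply: measurableI => //; exact: (mK k).1.
exists (S `&` K k); split => //.
have SK_fin : (mu (S `&` K k) < +oo)%E.
  apply: le_lt_trans (mK k).2; apply: le_measure; rewrite ?inE //.
  exact: (mK k).1.
exists (fine (mu (S `&` K k))); first by rewrite fineK // ge0_fin_numE.
by rewrite fine_gt0 // SK_fin lt0e Sk0 measure_ge0.
Qed.

Section lp_H_pow.
Context (R : realType) (d : measure_display) (T : measurableType d)
  (mu : {measure set T -> \bar R}) (E : normedModType R) (G : countType) (p : R).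
Hypothesis p_gt0 : 0 < p.
Implicit Types (eta : G -> E) (xi : G -> T -> E).

Definition lp_pow (eta : G -> E) : \bar R :=
  (\esum_(g in setT) ((`|eta g| `^ p)%:E))%E.

Definition H_pow (xi : G -> T -> E) : \bar R :=
  (\esum_(g in setT) (\int[mu]_x ((`|xi g x| `^ p)%:E)))%E.

Lemma measurable_fun_norm_powR (f : T -> E) : borel_meas f ->
  measurable_fun setT (fun x => (`|f x| `^ p)%:E).
Proof.
move=> bf; apply/measurable_EFinP.
exact: (measurableT_comp (measurable_powR p) (measurable_fun_norm bf)).
Qed.

Lemma lp_pow_ge0 eta : (0 <= lp_pow eta)%E.
Proof. by apply: esum_ge0 => g _; rewrite lee_fin powR_ge0. Qed.

Lemma H_pow_ge0 xi : (0 <= H_pow xi)%E.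
Proof.
by apply: esum_ge0 => g _; apply: integral_ge0 => x _; rewrite lee_fin powR_ge0.
Qed.

Lemma lp_norm_le eta c : 0 <= c ->
  (lp_norm p eta <= c%:E)%E = (lp_pow eta <= (c `^ p)%:E)%E.
Proof.
move=> c0; rewrite [in LHS](EFin_powRK p_gt0 c0) ge0_lee_poweR2 ?invr_gt0 //.
- exact: lp_pow_ge0.
- by rewrite lee_fin powR_ge0.
Qed.

Lemma H_norm_le xi c : 0 <= c ->
  (H_norm mu p xi <= c%:E)%E = (H_pow xi <= (c `^ p)%:E)%E.
Proof.
move=> c0; rewrite [in LHS](EFin_powRK p_gt0 c0) ge0_lee_poweR2 ?invr_gt0 //.
- exact: H_pow_ge0.
- by rewrite lee_fin powR_ge0.
Qed.

Lemma lp_powZ k eta : lp_pow (fun g => k *: eta g) = ((`|k| `^ p)%:E * lp_pow eta)%E.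
Proof.
rewrite /lp_pow -esumZl //.
by apply: eq_esum => g _; rewrite normrZ powRM // -EFinM.
Qed.

Lemma lp_pow_ge_sum eta (K : seq G) : uniq K ->
  ((\sum_(k <- K) `|eta k| `^ p)%:E <= lp_pow eta)%E.
Proof.
move=> uK; apply: esum_ge; exists [set` K]; first by split; [exact: finite_seq|].
by rewrite -fsbig_seq // sumEFin.
Qed.

Lemma lp_pow_eq0 eta : lp_pow eta = 0%E -> forall g, eta g = 0.
Proof.
move=> eta0 g; have := @lp_pow_ge_sum eta [:: g] isT.
rewrite eta0 big_seq1 lee_fin => h.
have : `|eta g| `^ p = 0 by apply/eqP; rewrite eq_le h powR_ge0.
by move/powR_eq0_eq0/eqP; rewrite normr_eq0 => /eqP.
Qed.

Lemma lp_pow0 eta : (forall g, eta g = 0) -> lp_pow eta = 0%E.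
Proof. by move=> eta0; apply: esum1 => g _; rewrite eta0 normr0 powR0 // gt_eqF. Qed.

Lemma lp_pow_finite_support eta (K : seq G) : uniq K ->
  (forall g, g \notin K -> eta g = 0) ->
  lp_pow eta = (\sum_(g <- K) `|eta g| `^ p)%:E.
Proof.
move=> uK eta0; rewrite /lp_pow (esumID [set` K]); last first.
  by move=> g _; rewrite lee_fin powR_ge0.
rewrite [X in (_ + X)%E]esum1 ?adde0; last first.
  by move=> g [_ /negP gK]; rewrite eta0 ?normr0 ?powR0 ?gt_eqF //; exact/negP.
rewrite setTI esum_fset; [|exact: finite_seq|by move=> g _; rewrite lee_fin powR_ge0].
by rewrite -fsbig_seq // sumEFin.
Qed.

(* Tonelli for the counting measure on [G] and [mu]. *)
Lemma H_pow_fiber xi : (forall g, borel_meas (xi g)) ->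
  H_pow xi = (\int[mu]_x lp_pow (fun g => xi g x))%E.
Proof.
move=> bxi; rewrite /H_pow /lp_pow ge0_integral_esum => [//|g|g x].
- exact: measurable_fun_norm_powR.
- by rewrite lee_fin powR_ge0.
Qed.

Lemma lp_norm_le1 eta : (lp_norm p eta <= 1)%E = (lp_pow eta <= 1)%E.
Proof.
rewrite -[X in (_ <= X)%E](poweR1r p^-1) ge0_lee_poweR2 ?invr_gt0 //.
exact: lp_pow_ge0.
Qed.

Lemma H_norm_le1 xi : (H_norm mu p xi <= 1)%E = (H_pow xi <= 1)%E.
Proof.
rewrite -[X in (_ <= X)%E](poweR1r p^-1) ge0_lee_poweR2 ?invr_gt0 //.
exact: H_pow_ge0.
Qed.

Lemma H_opnorm_ge0 (op : (G -> T -> E) -> G -> T -> E) : (0 <= H_opnorm mu p op)%E.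
Proof.
pose xi0 : G -> T -> E := fun _ _ => 0.
have H_pow_xi0 : H_pow xi0 = 0%E.
  apply: esum1 => g _; rewrite /xi0 normr0 powR0 ?gt_eqF //.
  exact: integral0.
have xi0_1 : (H_norm mu p xi0 <= 1)%E by rewrite H_norm_le1 H_pow_xi0.
apply: le_trans (_ : (H_norm mu p (op xi0) <= _)%E); first exact: poweR_ge0.
apply: ereal_sup_ubound; exists xi0 => //; split => //; split.
  by move=> g; exact: borel_meas_cst.
exact: le_lt_trans xi0_1 (ltry 1).
Qed.

Lemma H_pow_indicator (A : set T) (r : R) eta :
  measurable A -> mu A = r%:E -> 0 <= r ->
  H_pow (fun g x => if x \in A then eta g else 0) = (r%:E * lp_pow eta)%E.
Proof.
move=> mA muA r0.
transitivity (\esum_(g in setT) (r%:E * (`|eta g| `^ p)%:E))%E; last first.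
  by rewrite esumZl // => g; rewrite lee_fin powR_ge0.
apply: eq_esum => g _.
transitivity (\int[mu]_x ((`|eta g| `^ p)%:E * (\1_A x)%:E))%E.
  apply: eq_integral => x _; rewrite indicE; case: (x \in A); first by rewrite mule1.
  by rewrite mule0 normr0 powR0 // gt_eqF.
rewrite ge0_integralZl ?lee_fin ?powR_ge0 //; last exact/measurable_EFinP/measurable_indic.
by rewrite integral_indic // setIT muA muleC.
Qed.

End lp_H_pow.

Section trajectorial.
Context (R : realType) (d : measure_display) (T : measurableType d)
  (mu : {measure set T -> \bar R}) (E : normedModType R)
  (G : countType) (mul : G -> G -> G) (inv : G -> G)
  (alpha : G -> T -> T) (p : R) (F : seq G) (a : G -> T -> E -> E).
Hypothesis p_gt0 : 0 < p.
Hypothesis measurable_alpha : forall g, measurable_fun setT (alpha g).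
Hypothesis a_Linf : forall h, h \in F -> Linf_op (a h).

Local Notation bx := (b_x mul inv alpha F a).
Local Notation bb := (bbar mul inv alpha F a).
Local Notation lp_pow := (lp_pow p).
Local Notation H_pow := (H_pow mu p).

Lemma b_xE x eta g : bx x eta g = \sum_(h <- F) a h (alpha (inv g) x) (eta (mul g h)).
Proof. by []. Qed.

Lemma bbarE xi g x : bb xi g x = bx x (fun g' => xi g' x) g.
Proof. by []. Qed.

Lemma b_xZ x k eta g : bx x (fun g' => k *: eta g') g = k *: bx x eta g.
Proof.
rewrite !b_xE scaler_sumr big_seq [RHS]big_seq; apply: eq_bigr => h hF.
by case: (a_Linf hF) => alin _ _; rewrite (linear_opZ alin).
Qed.

Lemma b_x0 x eta g : (forall g', eta g' = 0) -> bx x eta g = 0.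
Proof.
move=> eta0; rewrite b_xE big_seq big1 // => h hF.
by case: (a_Linf hF) => alin _ _; rewrite eta0 (linear_op0 alin).
Qed.

(* Normalise [eta] to [lp_pow eta = 1]. *)
Lemma lp_pow_b_x_le x eta c : 0 < c -> (lp_opnorm p (bx x) <= c%:E)%E ->
  (lp_pow (bx x eta) <= (c `^ p)%:E * lp_pow eta)%E.
Proof.
move=> c0 hc.
have := lp_pow_ge0 p eta; case lp_eta: (lp_pow eta) => [w| |] // w0; last first.
  by rewrite gt0_muley ?lte_fin ?powR_gt0 // leey.
move: w0; rewrite lee_fin le_eqVlt => /orP[/eqP w00|w_gt0].
  rewrite -w00 mule0 lp_pow0 // => g; apply: b_x0; apply: (lp_pow_eq0 (p := p)).
  by rewrite lp_eta -w00.
pose k := w `^ (- p^-1).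
have kp : k `^ p = w^-1 by rewrite powR_NinvK // ltW.
have k0 : 0 < k by apply: powR_gt0.
have eta'_pow : lp_pow (fun g => k *: eta g) = 1%E.
  by rewrite lp_powZ lp_eta gtr0_norm // kp -EFinM mulVf // gt_eqF.
have : (lp_pow (bx x (fun g => k *: eta g)) <= (c `^ p)%:E)%E.
  rewrite -(lp_norm_le p_gt0 _ (ltW c0)); apply: le_trans hc; apply: ereal_sup_ubound.
  exists (fun g => k *: eta g) => //.
  (* [eta'_pow] does not rewrite here: the goal sees [G] through its choiceType. *)
  rewrite /= lp_norm_le1 // le_eqVlt; apply/orP; left; apply/eqP; exact: eta'_pow.
rewrite (_ : bx x _ = (fun g => k *: bx x eta g)); last first.
  by apply/funext => g; rewrite b_xZ.
rewrite lp_powZ gtr0_norm // kp => h.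
have -> : lp_pow (bx x eta) = (w%:E * (w^-1%:E * lp_pow (bx x eta)))%E.
  by rewrite muleA -EFinM mulfV ?gt_eqF // mul1e.
by rewrite [X in (_ <= X)%E]muleC; apply: lee_wpmul2l => //; rewrite lee_fin ltW.
Qed.

Variable D : nat -> E.
Hypothesis D_dense : forall (y : E) (eps : R), 0 < eps -> exists n, `|y - D n| < eps.

Lemma borel_meas_bbar xi : (forall g, borel_meas (xi g)) ->
  forall g, borel_meas (bb xi g).
Proof.
move=> bxi g; apply: (borel_meas_sum D_dense) => h hF.
case: (a_Linf hF) => alin [C hC] ameas.
apply: (@borel_meas_lipschitz_comp _ _ _ _ D D_dense
  (fun x v => a h (alpha (inv g) x) v) C) => //.
- move=> v U oU.
  by have := measurable_alpha (inv g) measurableT (ameas v U oU); rewrite setTI.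
- by move=> x u w; rewrite -(linear_opB alin); exact: hC.
- exact: bxi.
Qed.

Lemma H_norm_bbar_le c : 0 < c ->
  (\forall x \ae mu, (lp_opnorm p (bx x) <= c%:E)%E) ->
  forall xi, in_H mu p xi -> (H_norm mu p xi <= 1)%E ->
  (H_norm mu p (bb xi) <= c%:E)%E.
Proof.
move=> c0 hc xi [bxi _].
rewrite (H_norm_le1 mu p_gt0) (H_norm_le mu p_gt0 _ (ltW c0)) => xi1.
apply: (@le_trans _ _ ((c `^ p)%:E * H_pow xi)%E); last first.
  by rewrite -[leRHS]mule1; apply: lee_wpmul2l => //; rewrite lee_fin powR_ge0.
have mlp xi' : (forall g, borel_meas (xi' g)) ->
    measurable_fun setT (fun x => lp_pow (fun g => xi' g x)).
  move=> bxi'; apply: measurable_fun_esum => [g|g x]; last by rewrite lee_fin powR_ge0.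
  exact: measurable_fun_norm_powR.
have bbxi := borel_meas_bbar bxi.
rewrite (H_pow_fiber mu p bbxi) (H_pow_fiber mu p bxi) -ge0_integralZl //; last 3 first.
- exact: mlp.
- by move=> x _; exact: lp_pow_ge0.
- by rewrite lee_fin powR_ge0.
apply: ae_ge0_le_integral => //.
- by move=> x _; exact: lp_pow_ge0.
- exact: mlp.
- by move=> x _; apply: mule_ge0; [rewrite lee_fin powR_ge0|exact: lp_pow_ge0].
- by apply: emeasurable_funM; [exact: measurable_cst|exact: mlp].
- by apply: filterS hc => x hx _; exact: lp_pow_b_x_le.
Qed.

Lemma bbar_indicator (A : set T) eta g x :
  bb (fun g' x' => if x' \in A then eta g' else 0) g x =
  if x \in A then bx x eta g else 0.
Proof. by rewrite bbarE; case: (boolP (x \in A)) => // _; exact: b_x0. Qed.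

Lemma H_pow_bbar_indicator_ge (A : set T) eta (J : seq G) (c : R) :
  measurable A -> uniq J -> 0 <= c ->
  (forall x, A x -> c <= \sum_(g <- J) `|bx x eta g| `^ p) ->
  (c%:E * mu A <= H_pow (bb (fun g x => if x \in A then eta g else 0%R)))%E.
Proof.
move=> mA uJ c0 Ac.
set xi := (fun g x => _).
have mbb g : measurable_fun setT (fun x => (`|bb xi g x| `^ p)%:E).
  apply: measurable_fun_norm_powR; apply: borel_meas_bbar => g'.
  exact: borel_meas_if.
have mind : measurable_fun setT (fun x => (\1_A x)%:E : \bar R).
  exact/measurable_EFinP/measurable_indic.
apply: (@le_trans _ _ (\sum_(g <- J) \int[mu]_x ((`|bb xi g x| `^ p)%:E))%E); last first.
  apply: esum_ge; exists [set` J]; first by split; [exact: finite_seq|].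
  by rewrite -fsbig_seq.
rewrite -ge0_integral_sum // -(setIT A) -integral_indic // -ge0_integralZl ?lee_fin //.
apply: ge0_le_integral => //.
- by move=> x _; rewrite mule_ge0 ?lee_fin ?indicE.
- by apply: emeasurable_funM => //; exact: measurable_cst.
- by apply: emeasurable_sum => g; exact: mbb.
move=> x _; rewrite indicE; case: (boolP (x \in A)) => xA; last first.
  by rewrite mule0; apply: sume_ge0 => g _; rewrite lee_fin powR_ge0.
rewrite mule1 sumEFin lee_fin.
have -> : \sum_(g <- J) `|bb xi g x| `^ p = \sum_(g <- J) `|bx x eta g| `^ p.
  by apply: eq_bigr => g _; rewrite /xi bbar_indicator xA.
exact/Ac/set_mem.
Qed.

Definition dense_vec (s : seq (G * nat)) (g : G) : E :=
  \sum_(q <- s | q.1 == g) D q.2.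

Definition dense_pow (s : seq (G * nat)) : R :=
  \sum_(g <- undup (map fst s)) `|dense_vec s g| `^ p.

Lemma dense_vec_out s g : g \notin map fst s -> dense_vec s g = 0.
Proof.
move=> gs; rewrite /dense_vec big_seq_cond big1 // => q /andP[qs /eqP qg].
by move: gs; rewrite -qg map_f.
Qed.

Lemma dense_vec_map (K : seq G) (n : G -> nat) k : uniq K -> k \in K ->
  dense_vec [seq (k', n k') | k' <- K] k = D (n k).
Proof.
move=> uK kK; rewrite /dense_vec big_map /=.
by rewrite -big_filter filter_pred1_uniq // big_seq1.
Qed.

Lemma lp_pow_dense_vec s : lp_pow (dense_vec s) = (dense_pow s)%:E.
Proof.
apply: lp_pow_finite_support => //; first exact: undup_uniq.
by move=> g; rewrite mem_undup; exact: dense_vec_out.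
Qed.

Lemma dense_pow_ge0 s : 0 <= dense_pow s.
Proof. by apply: sumr_ge0 => g _; exact: powR_ge0. Qed.

Lemma measurable_fun_b_x_pow eta g :
  measurable_fun setT (fun x => `|bx x eta g| `^ p).
Proof.
apply: (measurableT_comp (measurable_powR p)); apply: measurable_fun_norm.
exact: (borel_meas_bbar (xi := fun g' _ => eta g') (fun g' => borel_meas_cst T (eta g'))).
Qed.

Definition above (n : R) (m : nat) : R := n + m.+1%:R^-1.

Lemma above_gt n m : n < above n m.
Proof. by rewrite /above ltrDl invr_gt0 ltr0n. Qed.

(* [i = (s, J, m)] witnesses [lp_opnorm p (bx x) > n] through the test vector
   [dense_vec s], whose finitely many coordinates are taken from [D], and the
   finite window [J] of coordinates of [bx x (dense_vec s)]. The index type is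
   countable, so that the set of such [x] is a countable union of these sets. *)
Definition bad_set (n : R) (i : seq (G * nat) * seq G * nat) : set T :=
  [set x | uniq i.1.2 /\ above n i.2 `^ p * dense_pow i.1.1 <
     \sum_(g <- i.1.2) `|bx x (dense_vec i.1.1) g| `^ p].

Lemma measurable_bad_set n i : measurable (bad_set n i).
Proof.
case: i => [[s J] m]; rewrite /bad_set /=.
have [uJ|uJ] := boolP (uniq J); last first.
  by rewrite (_ : [set _ | _] = set0) //; apply/seteqP; split => x // [/negP].
have mf : measurable_fun setT (fun x => \sum_(g <- J) `|bx x (dense_vec s) g| `^ p).
  by apply: measurable_sum => g; exact: measurable_fun_b_x_pow.
rewrite (_ : [set _ | _] = setT `&` (fun x => \sum_(g <- J) `|bx x (dense_vec s) g| `^ p)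
   @^-1` `](above n m `^ p * dense_pow s), +oo[%classic).
  by apply: mf => //; exact: measurable_itv.
by apply/seteqP; split => x /=; rewrite in_itv /= andbT; [case|move=> [_ h]; split].
Qed.

Lemma bad_set_dense_pow_gt0 n i x : bad_set n i x -> 0 < dense_pow i.1.1.
Proof.
case: i => [[s J] m] [_ /= bad_x]; rewrite lt_def dense_pow_ge0 andbT.
apply/eqP => W0; have eta0 g : dense_vec s g = 0.
  by apply: (lp_pow_eq0 (p := p)); rewrite lp_pow_dense_vec W0.
move: bad_x; rewrite W0 mulr0 big1 ?ltxx // => g _.
by rewrite b_x0 // normr0 powR0 // gt_eqF.
Qed.

Lemma bad_set_null n : 0 <= n -> sigma_finite setT mu ->
  (forall xi, in_H mu p xi -> (H_norm mu p xi <= 1)%E ->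
     (H_norm mu p (bb xi) <= n%:E)%E) ->
  forall i, mu (bad_set n i) = 0%E.
Proof.
move=> n0 mu_sf hn [[s J] m]; apply/eqP/contraT => bad0.
have [A [mA Abad [r muA r_gt0]]] :=
  sigma_finite_subset_pos_measure mu_sf (measurable_bad_set n (s, J, m)) bad0.
have [x0 Ax0] : A !=set0.
  apply/set0P/negP => /eqP A0; move: muA; rewrite A0 measure0 => -[r0].
  by rewrite -r0 ltxx in r_gt0.
have W_gt0 := bad_set_dense_pow_gt0 (Abad x0 Ax0).
have uJ := (Abad x0 Ax0).1.
pose k := (r * dense_pow s) `^ (- p^-1).
have kp : k `^ p = (r * dense_pow s)^-1 by rewrite powR_NinvK // ltW // mulr_gt0.
have k_gt0 : 0 < k by apply: powR_gt0; rewrite mulr_gt0.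
pose eta g := k *: dense_vec s g.
pose xi g x := if x \in A then eta g else 0.
have H_pow_xi : H_pow xi = 1%E.
  rewrite /xi (H_pow_indicator p_gt0 _ mA muA (ltW r_gt0)) lp_powZ lp_pow_dense_vec.
  rewrite gtr0_norm // kp -!EFinM.
  by congr (_%:E); field; rewrite !gt_eqF.
have xi1 : (H_norm mu p xi <= 1)%E by rewrite (H_norm_le1 mu p_gt0) H_pow_xi.
have xi_H : in_H mu p xi.
  split; first by move=> g; exact: borel_meas_if.
  exact: le_lt_trans xi1 (ltry 1).
have := hn xi xi_H xi1; rewrite (H_norm_le mu p_gt0 _ n0) => hb.
suff : ((n `^ p)%:E < H_pow (bb xi))%E by rewrite ltNge hb.
have above_pow : (n `^ p < above n m `^ p).
  by apply: gt0_ltr_powR; rewrite ?inE ?nnegrE ?above_gt //; apply: ltW;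
     exact: le_lt_trans n0 (above_gt n m).
apply: (lt_le_trans _ (@H_pow_bbar_indicator_ge A eta J
  (k `^ p * above n m `^ p * dense_pow s) mA uJ _ _)).
- rewrite muA -EFinM lte_fin.
  rewrite (_ : _ * r = above n m `^ p) //.
  by rewrite kp; field; rewrite !gt_eqF.
- by rewrite !mulr_ge0 ?powR_ge0 ?dense_pow_ge0.
- move=> x Ax; have [_ bad_x] := Abad x Ax.
  have -> : \sum_(g <- J) `|bx x eta g| `^ p =
      k `^ p * \sum_(g <- J) `|bx x (dense_vec s) g| `^ p.
    rewrite mulr_sumr; apply: eq_bigr => g _.
    by rewrite /eta b_xZ normrZ gtr0_norm // powRM // ltW.
  by rewrite -mulrA ler_wpM2l ?powR_ge0 // ltW.
Qed.

Lemma dense_vec_approx (eta : G -> E) (K : seq G) : uniq K ->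
  exists s : nat -> seq (G * nat),
    (forall k, k \in K -> dense_vec (s j) k @[j --> \oo] --> eta k) /\
    forall j, dense_pow (s j) = \sum_(k <- K) `|dense_vec (s j) k| `^ p.
Proof.
move=> uK.
have nP j k : exists n, `|eta k - D n| < j.+1%:R^-1.
  by apply: D_dense; rewrite invr_gt0 ltr0n.
exists (fun j => [seq (k, xchoose (nP j k)) | k <- K]); split => [k kK|j].
- apply/cvgrPdist_lt => e e0.
  have := near_infty_natSinv_lt (PosNum e0); apply: filterS => j hj.
  by rewrite dense_vec_map //; apply: lt_trans (xchooseP (nP j k)) _.
- rewrite /dense_pow; congr (\sum_(k <- _) _).
  by rewrite -map_comp /= map_id_in ?undup_id.
Qed.

Lemma b_x_cvg x (eta_ : nat -> G -> E) (eta : G -> E) g :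
  (forall h, h \in F -> eta_ j (mul g h) @[j --> \oo] --> eta (mul g h)) ->
  bx x (eta_ j) g @[j --> \oo] --> bx x eta g.
Proof.
move=> eta_cvg; rewrite b_xE; under eq_cvg do rewrite b_xE.
apply: cvg_sum_seq => h hF; have [C hC] := Linf_op_lipschitz (a_Linf hF).
by apply: (@lipschitz_cvg _ _ _ _ C) (eta_cvg h hF) => u v; exact: hC.
Qed.

Lemma dense_vec_witness x eta (J : seq G) c : 0 <= c -> (lp_pow eta <= 1)%E ->
  c `^ p < \sum_(g <- J) `|bx x eta g| `^ p ->
  exists s, c `^ p * dense_pow s < \sum_(g <- J) `|bx x (dense_vec s) g| `^ p.
Proof.
move=> c0 eta1 lt_c.
set K := undup [seq mul g h | g <- J, h <- F].
set t := \sum_(g <- J) _ in lt_c.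
set w := \sum_(k <- K) `|eta k| `^ p.
have [s [s_cvg s_pow]] := dense_vec_approx eta (undup_uniq _ : uniq K).
have pow_cvg : dense_pow (s j) @[j --> \oo] --> w.
  under eq_cvg do rewrite s_pow.
  apply: cvg_sum_seq => k kK.
  have := continuous_cvg _ (@continuous_norm_powR _ E p p_gt0 (eta k)) (s_cvg k kK).
  exact.
have b_x_pow_cvg : \sum_(g <- J) `|bx x (dense_vec (s j)) g| `^ p @[j --> \oo] --> t.
  apply: cvg_sum_seq => g gJ.
  apply: (continuous_cvg _ (@continuous_norm_powR _ E p p_gt0 _)); apply: b_x_cvg => h hF.
  by apply: s_cvg; rewrite mem_undup; exact: allpairs_f.
have gap_gt0 : 0 < t - c `^ p * w.
  rewrite subr_gt0; apply: le_lt_trans lt_c; rewrite -[leRHS]mulr1.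
  apply: ler_wpM2l; first exact: powR_ge0.
  by rewrite -lee_fin; exact: le_trans (lp_pow_ge_sum p eta (undup_uniq _)) eta1.
have gap_cvg : \sum_(g <- J) `|bx x (dense_vec (s j)) g| `^ p - c `^ p * dense_pow (s j)
    @[j --> \oo] --> t - c `^ p * w.
  by apply: cvgB => //; apply: cvgM => //; exact: cvg_cst.
have [N _ HN] := cvgr_gt _ gap_cvg 0 gap_gt0.
by exists (s N); have := HN N (leqnn N) => /=; rewrite subr_gt0.
Qed.

Lemma bad_set_cover n x : 0 <= n -> (n%:E < lp_opnorm p (bx x))%E ->
  exists i, bad_set n i x.
Proof.
move=> n0 /ereal_sup_gt [_ [eta eta1 <-] lt_n].
rewrite /= lp_norm_le1 // in eta1.
have : ((n `^ p)%:E < lp_pow (bx x eta))%E.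
  by rewrite ltNge -(lp_norm_le p_gt0 _ n0) -ltNge.
move=> /ereal_sup_gt [_ [X [finX _] <-]].
rewrite fsbig_finite //= sumEFin lte_fin.
set J := finmap.enum_fset (fset_set X).
set t := \sum_(g <- J) _ => lt_t.
have t0 : 0 <= t by apply: sumr_ge0 => g _; exact: powR_ge0.
have lt_n' : n < t `^ p^-1.
  have := @gt0_ltr_powR R p^-1 _ (n `^ p) t _ _ lt_t.
  rewrite -powRrM mulfV ?gt_eqF // powRr1 //.
  by apply; rewrite ?inE ?nnegrE ?invr_gt0 ?powR_ge0.
have [m lt_m] : exists m, above n m < t `^ p^-1.
  have e0 : 0 < t `^ p^-1 - n by rewrite subr_gt0.
  have [M _ HM] := near_infty_natSinv_lt (PosNum e0).
  by exists M; have := HM M (leqnn M) => /=; rewrite ltrBrDl.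
have above0 : 0 <= above n m by apply: ltW; exact: le_lt_trans n0 (above_gt n m).
have lt_above : above n m `^ p < t.
  have := @gt0_ltr_powR R p p_gt0 (above n m) (t `^ p^-1) _ _ lt_m.
  rewrite -powRrM mulVf ?gt_eqF // powRr1 //.
  by apply; rewrite ?inE ?nnegrE ?powR_ge0.
have [s lt_s] := dense_vec_witness above0 eta1 lt_above.
by exists (s, J, m); split => //; exact: finmap.fset_uniq.
Qed.

Lemma ae_lp_opnorm_b_x_le n : 0 <= n -> sigma_finite setT mu ->
  (forall xi, in_H mu p xi -> (H_norm mu p xi <= 1)%E ->
     (H_norm mu p (bb xi) <= n%:E)%E) ->
  \forall x \ae mu, (lp_opnorm p (bx x) <= n%:E)%E.
Proof.
move=> n0 mu_sf hn.
pose S k := if (pickle_inv k : option (seq (G * nat) * seq G * nat)) is Some i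
  then bad_set n i else set0.
have S_null k : mu.-negligible (S k).
  rewrite /S; case: pickle_inv => [i|]; last by exists set0; split => //; rewrite measure0.
  by exists (bad_set n i); split => //; [exact: measurable_bad_set|exact: bad_set_null].
apply: (negligibleS _ (negligible_bigcup S_null)) => x /= x_bad.
have : (n%:E < lp_opnorm p (bx x))%E by rewrite ltNge; apply/negP.
move/(bad_set_cover n0) => [i bad_i]; exists (pickle i) => //.
by rewrite /S pickleK_inv.
Qed.

Lemma H_opnorm_le_ess_sup :
  (H_opnorm mu p bb <= ess_sup_nonneg mu (fun x => lp_opnorm p (bx x)))%E.
Proof.
apply: le_ereal_inf_tmp => C [C0 hC].
case: C C0 hC => [c| |] C0 hC; last 2 first.
- exact: leey.
- by move: (le_lt_trans C0 ltNy0); rewrite ltxx.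
apply: ge_ereal_sup => _ [xi [xi_H xi1] <-].
rewrite lee_fin le_eqVlt in C0; case/orP: C0 => [/eqP c0|c_gt0]; last exact: H_norm_bbar_le.
apply/lee_addgt0Pr => e e0; rewrite -c0 add0e.
apply: (H_norm_bbar_le e0) xi_H xi1; apply: filterS hC => x hx.
by apply: le_trans hx _; rewrite -c0 lee_fin ltW.
Qed.

Lemma ess_sup_le_H_opnorm : sigma_finite setT mu ->
  (ess_sup_nonneg mu (fun x => lp_opnorm p (bx x)) <= H_opnorm mu p bb)%E.
Proof.
move=> mu_sf; have N0 := H_opnorm_ge0 mu p_gt0 bb.
apply: ereal_inf_lbound; split => //.
case EN: (H_opnorm mu p bb) N0 => [n| |] N0.
- apply: ae_lp_opnorm_b_x_le => // xi xi_H xi1.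
  by rewrite -EN; apply: ereal_sup_ubound; exists xi.
- by apply: aeW => x; exact: leey.
- by move: (le_lt_trans N0 ltNy0); rewrite ltxx.
Qed.

Lemma H_opnorm_bbar : sigma_finite setT mu ->
  H_opnorm mu p bb = ess_sup_nonneg mu (fun x => lp_opnorm p (bx x)).
Proof.
by move=> mu_sf; apply/eqP; rewrite eq_le H_opnorm_le_ess_sup ess_sup_le_H_opnorm.
Qed.

End trajectorial.

Unset Implicit Arguments.

(* Only [0 < p], sigma-finiteness, the separability of [E] and the
   measurability of the [alpha g] are used: [bbar] and [b_x] evaluate the
   [a h] at the same point [alpha (inv g) x], so neither the group structure
   nor the invariance of null sets enters. *)
Theorem lemma3p5
  (R : realType) (d : measure_display) (T : measurableType d)
  (mu : {measure set T -> \bar R})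
  (E : completeNormedModType R)
  (G : countType) (mul : G -> G -> G) (inv : G -> G) (e : G)
  (alpha : G -> T -> T) (p : R)
  (F : seq G) (a : G -> T -> E -> E) :
  1 < p ->
  sigma_finite setT mu ->
  separable_measure mu ->
  separable_space E ->
  is_group mul inv e ->
  is_group_action mul e alpha ->
  (forall g, measurable_fun setT (alpha g)) ->
  (forall g A, measurable A -> mu A = 0%E -> mu (alpha g @^-1` A) = 0%E) ->
  uniq F ->
  (forall h, h \in F -> Linf_op (a h)) ->
  H_opnorm mu p (bbar mul inv alpha F a) =
  ess_sup_nonneg mu (fun x => lp_opnorm p (b_x mul inv alpha F a x)).
Proof.
move=> p_gt1 mu_sigma_finite _ [D D_dense] _ _ measurable_alpha _ _ a_Linf.
exact: (H_opnorm_bbar mul inv (lt_trans ltr01 p_gt1) measurable_alpha a_Linf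
  D_dense mu_sigma_finite).
Qed.
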